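(* Let $x,y\ge 1$, $n\ge\max(x,y)$, and let $G$ be a minimal $(x,y)$ task-dependency graph of order $n$. Then $G$ has the maximum possible number of edges among all minimal $(x,y)$ task-dependency graphs of order $n$ if and only if $G$ has at most two components that are not isolated vertices, and (1) if $G$ consists of all isolated vertices, then $n=x=y$; (2) if $G$ has two components that are not isolated vertices, then $G$ has no interior vertex; and (3) if $G$ has exactly one component $C$ that is not an isolated vertex, then either (a) $C$ has no interior vertex; (b) there exist an initial vertex $u$, a terminal vertex $v$, and multiple interior vertices in $C$ such that all interior vertices of $C$ are adjacent to both $u$ and $v$, where $u$ may be adjacent to more terminal vertices and $v$ may be adjacent to more initial vertices; or (c) $C$ has exactly one interior vertex, which is adjacent to $p>0$ initial vertices and $q>0$ terminal vertices; if $p=1$ this initial vertex may be adjacent to more terminal vertices; if $q=1$ this terminal vertex may be adjacent to more initial vertices; if $p>1$ these initial vertices are adjacent only to the interior vertex; if $q>1$ these terminal vertices are adjacent only to the interior vertex.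
   Context: A task-dependency graph is a finite directed acyclic graph (no loops, no multiple edges). A vertex is initial if it has in-degree $0$, terminal if it has out-degree $0$ (an isolated vertex is both), exterior if it is initial or terminal, and interior otherwise. An $(x,y)$ task-dependency graph has exactly $x$ initial and $y$ terminal vertices; it is minimal if removing any single edge produces a graph that is not an $(x,y)$ task-dependency graph. Components are connected components of the underlying undirected graph; two vertices are adjacent if there is an edge between them in either direction. The order is the number of vertices. *)

(* A task-dependency graph of order n has vertex set 'I_n and
   a set of directed edges E : {set 'I_n * 'I_n} (so no multiple edges). *)
From mathcomp Require Import all_boot.
Set Implicit Arguments. Unset Strict Implicit. Unset Printing Implicit Defensive.

Section TDG.
Variable n : nat.
Implicit Types (E : {set 'I_n * 'I_n}) (v : 'I_n).

Definition erel E : rel 'I_n := fun u v => (u, v) \in E.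

(* acyclic: no directed cycle (this also excludes loops) *)
Definition acyclic E : Prop := forall u v, (u, v) \in E -> ~~ connect (erel E) v u.

Definition initial E v : bool := [forall u, (u, v) \notin E].
Definition terminal E v : bool := [forall w, (v, w) \notin E].
Definition interior E v : bool := ~~ initial E v && ~~ terminal E v.

Definition ninitial E : nat := #|[set v | initial E v]|.
Definition nterminal E : nat := #|[set v | terminal E v]|.

Definition tdg (x y : nat) E : Prop :=
  acyclic E /\ ninitial E = x /\ nterminal E = y.

Definition minimal_tdg (x y : nat) E : Prop :=
  tdg x y E /\ forall e, e \in E -> ~ tdg x y (E :\ e).

Definition adj E : rel 'I_n := fun u v => ((u, v) \in E) || ((v, u) \in E).

Definition isolated E v : bool := [forall w, ~~ adj E v w].

Definition comp E v : {set 'I_n} := [set w | connect (adj E) v w].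

Definition nontriv_comps E : {set {set 'I_n}} :=
  [set comp E v | v in [set v | ~~ isolated E v]].

End TDG.

(* In a minimal graph every edge (a, b) is the only out-edge of a or the only
   in-edge of b, since otherwise deleting it changes no initial or terminal
   vertex.  So the edges split into stars: the out-edges of a vertex of
   out-degree at least 2, the in-edges of a vertex of in-degree at least 2, and
   the remaining single edges.  A star with c edges has c + 1 tails and heads
   together, and every non-terminal vertex is a tail, every non-initial vertex
   a head, of exactly one star; hence |E| + #stars = (n - y) + (n - x), and the
   maximum graphs are those with fewest stars.  If x or y is at least n - 1
   every minimal graph has at most one star, otherwise a source hub and a sink
   hub achieve two; so E is maximum iff it has at most two stars.
   Each non-trivial component contains a star, the in-edges and the out-edges
   of an interior vertex lie in two different stars, and a star touching no
   interior vertex is a whole component.  With at most two stars this leaves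
   exactly the listed component shapes, and each of them has at most two
   stars. *)

From Pilot Require Import Defs.
From mathcomp Require Import all_boot zify.
Set Implicit Arguments. Unset Strict Implicit. Unset Printing Implicit Defensive.

Lemma card_sum_set (T1 T2 : finType) (A : {set T1 + T2}) :
  #|A| = #|[set a | inl a \in A]| + #|[set b | inr b \in A]|.
Proof. by rewrite -sum1_card big_sumType !sum1dep_card. Qed.

Lemma card_imset_le1 (aT rT : finType) (f : aT -> rT) (A : {set aT}) :
  {in A &, forall x y, f x = f y} -> #|f @: A| <= 1.
Proof.
by move=> fA; apply/card_le1_eqP => _ _ /imsetP[x xA ->] /imsetP[y yA ->]; apply: fA.
Qed.

Lemma connect_closed_fwd (T : finType) (e : rel T) (S : pred T) :
  (forall x y, S x -> e x y -> S y) -> forall x y, S x -> connect e x y -> S y.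
Proof.
move=> clS x y Sx /connectP[p]; elim: p x Sx => [|z p IHp] x Sx /=; first by move=> _ ->.
by case/andP=> xz pz; apply: IHp pz; apply: clS xz.
Qed.

Lemma card_ord_interval n a b : #|[set v : 'I_n | a <= v < b]| = minn b n - minn a n.
Proof.
have -> : #|[set v : 'I_n | a <= v < b]| = count (fun k => a <= k < b) (iota 0 n).
  by rewrite cardsE cardE /enum_mem -val_enum_ord count_map size_filter enumT.
elim: n => [|n IHn]; first by rewrite !minn0.
rewrite -addn1 iotaD count_cat IHn /= addn0.
by case: (leqP a n) => ?; case: (ltnP n b) => ? /=; lia.
Qed.

(** * Degrees and critical edges *)

Section Degrees.
Variables (n : nat) (E : {set 'I_n * 'I_n}).
Implicit Types (a b c v : 'I_n).

Definition outdeg a := #|[set b | (a, b) \in E]|.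
Definition indeg b := #|[set a | (a, b) \in E]|.

Lemma terminalP v : reflect (forall w, (v, w) \notin E) (terminal E v).
Proof. exact: forallP. Qed.

Lemma initialP v : reflect (forall u, (u, v) \notin E) (initial E v).
Proof. exact: forallP. Qed.

Lemma terminalPn v : reflect (exists w, (v, w) \in E) (~~ terminal E v).
Proof. by apply: (iffP forallPn) => -[w]; rewrite ?negbK; exists w; rewrite ?negbK. Qed.

Lemma initialPn v : reflect (exists u, (u, v) \in E) (~~ initial E v).
Proof. by apply: (iffP forallPn) => -[u]; rewrite ?negbK; exists u; rewrite ?negbK. Qed.

Lemma terminal_edge a b : terminal E a -> (a, b) \in E = false.
Proof. by move/terminalP/(_ b)/negbTE. Qed.

Lemma initial_edge a b : initial E b -> (a, b) \in E = false.
Proof. by move/initialP/(_ a)/negbTE. Qed.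

Lemma interior_edges a b c : (a, b) \in E -> (b, c) \in E -> interior E b.
Proof.
by move=> ab bc; apply/andP; split; [apply/initialPn; exists a | apply/terminalPn; exists c].
Qed.

Lemma terminalE v : terminal E v = (outdeg v == 0).
Proof.
rewrite /outdeg cards_eq0; apply/terminalP/eqP => [nv|/setP e0 w].
  by apply/setP => w; rewrite !inE (negbTE (nv w)).
by have := e0 w; rewrite !inE => ->.
Qed.

Lemma initialE v : initial E v = (indeg v == 0).
Proof.
rewrite /indeg cards_eq0; apply/initialP/eqP => [nv|/setP e0 u].
  by apply/setP => u; rewrite !inE (negbTE (nv u)).
by have := e0 u; rewrite !inE => ->.
Qed.

Lemma outdeg_gt0 a b : (a, b) \in E -> 0 < outdeg a.
Proof. by move=> ab; apply/card_gt0P; exists b; rewrite inE. Qed.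

Lemma indeg_gt0 a b : (a, b) \in E -> 0 < indeg b.
Proof. by move=> ab; apply/card_gt0P; exists a; rewrite inE. Qed.

Lemma outdeg1_eq a b c : outdeg a = 1 -> (a, b) \in E -> (a, c) \in E -> b = c.
Proof.
by move=> d1 ab ac; have /card_le1_eqP := eq_leq d1; apply; rewrite inE.
Qed.

Lemma indeg1_eq a b c : indeg c = 1 -> (a, c) \in E -> (b, c) \in E -> a = b.
Proof.
by move=> d1 ac bc; have /card_le1_eqP := eq_leq d1; apply; rewrite inE.
Qed.

Lemma outdeg_gt1 a b c : (a, b) \in E -> (a, c) \in E -> b != c -> 1 < outdeg a.
Proof.
move=> ab ac bc; have <- : #|[set b; c]| = 2 by rewrite cards2 bc.
apply: subset_leq_card.
by apply/subsetP => w; rewrite !inE => /orP[] /eqP->.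
Qed.

Lemma indeg_gt1 a b c : (a, c) \in E -> (b, c) \in E -> a != b -> 1 < indeg c.
Proof.
move=> ac bc ab; have <- : #|[set a; b]| = 2 by rewrite cards2 ab.
apply: subset_leq_card.
by apply/subsetP => w; rewrite !inE => /orP[] /eqP->.
Qed.

Lemma outdeg_gt1P a b : 1 < outdeg a -> exists2 c, (a, c) \in E & c != b.
Proof.
move=> d2; have /subsetPn[c] : ~~ ([set w | (a, w) \in E] \subset [set b]).
  by apply: contraTN d2 => /subset_leq_card; rewrite cards1 -ltnNge ltnS.
by rewrite !inE; exists c.
Qed.

Lemma indeg_gt1P b a : 1 < indeg b -> exists2 c, (c, b) \in E & c != a.
Proof.
move=> d2; have /subsetPn[c] : ~~ ([set w | (w, b) \in E] \subset [set a]).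
  by apply: contraTN d2 => /subset_leq_card; rewrite cards1 -ltnNge ltnS.
by rewrite !inE; exists c.
Qed.

End Degrees.

Section EdgeRemoval.
Variables (n : nat) (E : {set 'I_n * 'I_n}).
Implicit Types (a b : 'I_n).

Lemma ninitial_setD1 a b : 1 < indeg E b -> ninitial (E :\ (a, b)) = ninitial E.
Proof.
move=> ib; apply: eq_card => v; rewrite !inE; apply/initialP/initialP => nv u.
  apply/negP => uv; have [[eua evb]|ne] := eqVneq (u, v) (a, b).
    have [c cb ca] := indeg_gt1P a ib.
    by have := nv c; rewrite !inE evb cb xpair_eqE (negbTE ca).
  by have := nv u; rewrite !inE ne uv.
by rewrite !inE negb_and nv orbT.
Qed.

Lemma nterminal_setD1 a b : 1 < outdeg E a -> nterminal (E :\ (a, b)) = nterminal E.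
Proof.
move=> oa; apply: eq_card => v; rewrite !inE; apply/terminalP/terminalP => nv w.
  apply/negP => vw; have [[eva ewb]|ne] := eqVneq (v, w) (a, b).
    have [c ac cb] := outdeg_gt1P b oa.
    by have := nv c; rewrite !inE eva ac xpair_eqE (negbTE cb) andbF.
  by have := nv w; rewrite !inE ne vw.
by rewrite !inE negb_and nv orbT.
Qed.

Lemma ltn_ninitial_setD1 a b :
  (a, b) \in E -> indeg E b = 1 -> ninitial E < ninitial (E :\ (a, b)).
Proof.
move=> ab ib; apply: proper_card; rewrite properE; apply/andP; split.
  apply/subsetP => v; rewrite !inE => /initialP nv.
  by apply/initialP => u; rewrite !inE negb_and nv orbT.
apply/subsetPn; exists b; rewrite !inE; last by apply/initialPn; exists a.
apply/initialP => u; rewrite !inE negb_and negbK.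
by have [ub|] := boolP ((u, b) \in E); rewrite ?orbT // (indeg1_eq ib ab ub) eqxx.
Qed.

Lemma ltn_nterminal_setD1 a b :
  (a, b) \in E -> outdeg E a = 1 -> nterminal E < nterminal (E :\ (a, b)).
Proof.
move=> ab oa; apply: proper_card; rewrite properE; apply/andP; split.
  apply/subsetP => v; rewrite !inE => /terminalP nv.
  by apply/terminalP => w; rewrite !inE negb_and nv orbT.
apply/subsetPn; exists a; rewrite !inE; last by apply/terminalPn; exists b.
apply/terminalP => w; rewrite !inE negb_and negbK.
by have [aw|] := boolP ((a, w) \in E); rewrite ?orbT // (outdeg1_eq oa ab aw) eqxx.
Qed.

End EdgeRemoval.

Lemma nterminal_set0 n : nterminal (set0 : {set 'I_n * 'I_n}) = n.
Proof.
rewrite -[RHS]card_ord -cardsT; apply: eq_card => v.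
by rewrite !inE; apply/terminalP => w; rewrite inE.
Qed.

Lemma ninitial_set0 n : ninitial (set0 : {set 'I_n * 'I_n}) = n.
Proof.
rewrite -[RHS]card_ord -cardsT; apply: eq_card => v.
by rewrite !inE; apply/initialP => u; rewrite inE.
Qed.

Definition critical_edges n (E : {set 'I_n * 'I_n}) :=
  forall a b, (a, b) \in E -> outdeg E a = 1 \/ indeg E b = 1.

Lemma acyclic_sub n (E E' : {set 'I_n * 'I_n}) : E' \subset E -> acyclic E -> acyclic E'.
Proof.
move=> sE'E Eac u v uv; apply: contraNN (Eac _ _ (subsetP sE'E _ uv)).
by apply: connect_sub => a b ab; apply/connect1/(subsetP sE'E).
Qed.

Lemma minimal_tdg_critical n x y (E : {set 'I_n * 'I_n}) :
  minimal_tdg x y E -> critical_edges E.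
Proof.
case=> -[Eac [Ex Ey]] Emin a b ab.
case: (ltnP 1 (outdeg E a)) => [oa|]; last by have := outdeg_gt0 ab; left; lia.
case: (ltnP 1 (indeg E b)) => [ib|]; last by have := indeg_gt0 ab; right; lia.
case: (Emin _ ab); split; first exact: acyclic_sub (subD1set _ _) Eac.
by rewrite ninitial_setD1 // nterminal_setD1.
Qed.

Lemma critical_minimal_tdg n x y (E : {set 'I_n * 'I_n}) :
  tdg x y E -> critical_edges E -> minimal_tdg x y E.
Proof.
move=> Etdg Ecrit; split=> // -[a b] ab [_ [Ex' Ey']]; case: Etdg => _ [Ex Ey].
case: (Ecrit _ _ ab) => [/(ltn_nterminal_setD1 ab)|/(ltn_ninitial_setD1 ab)].
  by rewrite Ey Ey' ltnn.
by rewrite Ex Ex' ltnn.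
Qed.

Lemma acyclic_loop n (E : {set 'I_n * 'I_n}) a : acyclic E -> (a, a) \in E = false.
Proof. by move=> Eac; apply/negP => aa; have := Eac _ _ aa; rewrite connect0. Qed.

Lemma acyclic_edge_rev n (E : {set 'I_n * 'I_n}) a b :
  acyclic E -> (a, b) \in E -> (b, a) \in E = false.
Proof. by move=> Eac ab; apply/negP => ba; have := Eac _ _ ab; rewrite connect1. Qed.

(** * The star decomposition *)

Notation star n := ('I_n + 'I_n + 'I_n * 'I_n)%type.

Section Stars.
Variables (n : nat) (E : {set 'I_n * 'I_n}).
Implicit Types (a b c v : 'I_n) (e : 'I_n * 'I_n) (s : star n).

(* A star is coded by its centre: [OutStar a] stands for the out-edges of [a],
   [InStar b] for the in-edges of [b] and [EdgeStar e] for the single edge [e].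
   In a critical graph [star_of e] is the only star containing [e]. *)
Definition OutStar a : star n := inl (inl a).
Definition InStar b : star n := inl (inr b).
Definition EdgeStar e : star n := inr e.

Definition star_of e : star n :=
  if 1 < outdeg E e.1 then OutStar e.1
  else if 1 < indeg E e.2 then InStar e.2 else EdgeStar e.

Definition stars := star_of @: E.

Lemma star_of_cases e :
  [\/ star_of e = OutStar e.1, star_of e = InStar e.2 | star_of e = EdgeStar e].
Proof. by rewrite /star_of; case: ifP => _; [|case: ifP => _]; constructor. Qed.

Lemma star_of_eq e e' : star_of e = star_of e' -> e.1 = e'.1 \/ e.2 = e'.2.
Proof.
by case: (star_of_cases e) (star_of_cases e') => -> [] -> // [] ->; [left|right|left].
Qed.

Lemma star_of_cross_edge a b c d :
  (a, b) \in E -> (c, d) \in E -> star_of (a, b) = star_of (c, d) -> (c, b) \in E.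
Proof. by move=> ab cd /star_of_eq[/= <-|/= ->]. Qed.

Lemma star_of_same_tail a b b' :
  (a, b) \in E -> (a, b') \in E -> star_of (a, b) = star_of (a, b').
Proof.
move=> ab ab'; have [->//|bb'] := eqVneq b b'.
by rewrite /star_of /= (outdeg_gt1 ab ab' bb').
Qed.

Hypothesis Ecrit : critical_edges E.

Lemma critical_outdeg1 a b : (a, b) \in E -> 1 < indeg E b -> outdeg E a = 1.
Proof. by move=> ab; case: (Ecrit ab) => // ->. Qed.

Lemma critical_indeg1 a b : (a, b) \in E -> 1 < outdeg E a -> indeg E b = 1.
Proof. by move=> ab; case: (Ecrit ab) => // ->. Qed.

Lemma star_of_same_head a a' b :
  (a, b) \in E -> (a', b) \in E -> star_of (a, b) = star_of (a', b).
Proof.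
move=> ab a'b; have [->//|aa'] := eqVneq a a'.
have ib := indeg_gt1 ab a'b aa'.
by rewrite /star_of /= (critical_outdeg1 ab ib) (critical_outdeg1 a'b ib) ib.
Qed.

Lemma mem_stars s :
  s \in stars = match s with
                | inl (inl a) => 1 < outdeg E a
                | inl (inr b) => 1 < indeg E b
                | inr e => [&& e \in E, outdeg E e.1 == 1 & indeg E e.2 == 1]
                end.
Proof.
apply/imsetP/idP => [[[a b] ab ->]|].
  rewrite /star_of /=; case: ltnP => // oa; case: ltnP => // ib /=.
  by rewrite ab; have := outdeg_gt0 ab; have := indeg_gt0 ab; lia.
case: s => [[a|b]|[a b]] /=.
- by move=> oa; have [c ac _] := outdeg_gt1P a oa; exists (a, c); rewrite // /star_of oa.
- move=> ib; have [c cb _] := indeg_gt1P b ib; exists (c, b) => //.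
  by rewrite /star_of /= (critical_outdeg1 cb ib) ib.
- by case/and3P=> ab /eqP oa /eqP ib; exists (a, b); rewrite // /star_of /= oa ib.
Qed.

Lemma star_of_OutStar e a : star_of e = OutStar a -> e.1 = a.
Proof. by case: (star_of_cases e) => -> // -[]. Qed.

Lemma star_of_InStar e b : star_of e = InStar b -> e.2 = b.
Proof. by case: (star_of_cases e) => -> // -[]. Qed.

Lemma star_of_EdgeStar e e' : star_of e = EdgeStar e' -> e = e'.
Proof. by case: (star_of_cases e) => -> // -[]. Qed.

Lemma card_stars :
  #|stars| = #|[set a | 1 < outdeg E a]| + #|[set b | 1 < indeg E b]|
             + #|[set e in E | (outdeg E e.1 == 1) && (indeg E e.2 == 1)]|.
Proof.
by rewrite !card_sum_set; congr (_ + _ + _); apply: eq_card => ?; rewrite !inE mem_stars.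
Qed.

Lemma card_outdeg1_edges :
  #|[set e in E | outdeg E e.1 == 1]| = #|[set a | outdeg E a == 1]|.
Proof.
rewrite -(card_in_imset (f := fst)) => [|[a b] [a' b']]; last first.
  rewrite !inE /= => /andP[ab /eqP oa] /andP[a'b' _] eaa'.
  by rewrite -eaa' in a'b' *; rewrite (outdeg1_eq oa ab a'b').
apply: eq_card => a; rewrite inE; apply/imsetP/idP => [[e /[!inE] /andP[_ oe] ->]//|oa].
have /card_gt0P[b] : 0 < outdeg E a by rewrite (eqP oa).
by rewrite inE => ab; exists (a, b); rewrite // inE ab.
Qed.

Lemma card_indeg1_edges :
  #|[set e in E | indeg E e.2 == 1]| = #|[set b | indeg E b == 1]|.
Proof.
rewrite -(card_in_imset (f := snd)) => [|[a b] [a' b']]; last first.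
  rewrite !inE /= => /andP[ab /eqP ib] /andP[a'b' _] ebb'.
  by rewrite -ebb' in a'b' *; rewrite (indeg1_eq ib ab a'b').
apply: eq_card => b; rewrite inE; apply/imsetP/idP => [[e /[!inE] /andP[_ ie] ->]//|ib].
have /card_gt0P[a] : 0 < indeg E b by rewrite (eqP ib).
by rewrite inE => ab; exists (a, b); rewrite // inE ab.
Qed.

Lemma card_nonterminal :
  #|[set a | outdeg E a == 1]| + #|[set a | 1 < outdeg E a]| = n - nterminal E.
Proof.
have -> : n - nterminal E = #|~: [set v | terminal E v]|.
  by have := cardsC [set v | terminal E v]; rewrite card_ord /nterminal; lia.
rewrite -(cardsID [set a | outdeg E a == 1] (~: _)); congr (_ + _); apply: eq_card => a.
  by rewrite !inE terminalE andbC; case: (outdeg E a) => [|[]].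
by rewrite !inE terminalE; case: (outdeg E a) => [|[]].
Qed.

Lemma card_noninitial :
  #|[set b | indeg E b == 1]| + #|[set b | 1 < indeg E b]| = n - ninitial E.
Proof.
have -> : n - ninitial E = #|~: [set v | initial E v]|.
  by have := cardsC [set v | initial E v]; rewrite card_ord /ninitial; lia.
rewrite -(cardsID [set b | indeg E b == 1] (~: _)); congr (_ + _); apply: eq_card => b.
  by rewrite !inE initialE andbC; case: (indeg E b) => [|[]].
by rewrite !inE initialE; case: (indeg E b) => [|[]].
Qed.

Lemma card_edges_stars : #|E| + #|stars| = (n - nterminal E) + (n - ninitial E).
Proof.
set E1 := [set e in E | outdeg E e.1 == 1]; set E2 := [set e in E | indeg E e.2 == 1].
have E1U2 : E1 :|: E2 = E.
  apply/setP => -[a b]; rewrite !inE /=.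
  by case: (boolP ((a, b) \in E)) => //= /Ecrit[] ->; rewrite eqxx ?orbT.
have E1I2 : E1 :&: E2 = [set e in E | (outdeg E e.1 == 1) && (indeg E e.2 == 1)].
  by apply/setP => e; rewrite !inE andbACA andbb.
have := cardsUI E1 E2; rewrite E1U2 E1I2 card_outdeg1_edges card_indeg1_edges.
by rewrite card_stars -card_nonterminal -card_noninitial; lia.
Qed.

End Stars.

(** * Graphs with few stars *)

Section Extremal.
Variables (n : nat) (E : {set 'I_n * 'I_n}).

Lemma nterminal_ge_pred : n.-1 <= nterminal E <-> {in E &, forall e e', e.1 = e'.1}.
Proof.
split=> [le_nT [a b] [a' b'] ab a'b' /=|tail].
  have /card_le1_eqP : #|~: [set v | terminal E v]| <= 1.
    by have := cardsC [set v | terminal E v]; rewrite card_ord -/(nterminal E); lia.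
  by apply; rewrite !inE; apply/terminalPn; [exists b' | exists b].
have [E0|[[a b] ab]] := set_0Vmem E; first by rewrite E0 nterminal_set0 leq_pred.
rewrite -[n in n.-1]card_ord -(cardsC1 a); apply: subset_leq_card; apply/subsetP => v.
rewrite !inE => va; apply/terminalP => w; apply: contra va => vw.
by apply/eqP; apply: (tail (v, w) (a, b)).
Qed.

Lemma ninitial_ge_pred : n.-1 <= ninitial E <-> {in E &, forall e e', e.2 = e'.2}.
Proof.
split=> [le_nI [a b] [a' b'] ab a'b' /=|head].
  have /card_le1_eqP : #|~: [set v | initial E v]| <= 1.
    by have := cardsC [set v | initial E v]; rewrite card_ord -/(ninitial E); lia.
  by apply; rewrite !inE; apply/initialPn; [exists a' | exists a].
have [E0|[[a b] ab]] := set_0Vmem E; first by rewrite E0 ninitial_set0 leq_pred.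
rewrite -[n in n.-1]card_ord -(cardsC1 b); apply: subset_leq_card; apply/subsetP => v.
rewrite !inE => vb; apply/initialP => u; apply: contra vb => uv.
by apply/eqP; apply: (head (u, v) (a, b)).
Qed.

Lemma stars_eq0 : (#|stars E| == 0) = (E == set0).
Proof. by rewrite cards_eq0 imset_eq0. Qed.

Hypothesis Ecrit : critical_edges E.

Lemma card_stars_le1 : #|stars E| <= 1 <-> n.-1 <= nterminal E \/ n.-1 <= ninitial E.
Proof.
split=> [/card_le1_eqP st1|].
  have [E0|[e0 e0E]] := set_0Vmem E; first by left; rewrite E0 nterminal_set0 leq_pred.
  have st e : e \in E -> star_of E e = star_of E e0.
    by move=> eE; apply: st1; apply: imset_f.
  case: (star_of_cases E e0) => s0; [left|right|left].
  - apply/nterminal_ge_pred => e e' /st + /st.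
    by rewrite s0 => /star_of_OutStar-> /star_of_OutStar->.
  - apply/ninitial_ge_pred => e e' /st + /st.
    by rewrite s0 => /star_of_InStar-> /star_of_InStar->.
  - apply/nterminal_ge_pred => e e' /st + /st.
    by rewrite s0 => /star_of_EdgeStar-> /star_of_EdgeStar->.
case=> [/nterminal_ge_pred tail|/ninitial_ge_pred head]; apply: card_imset_le1.
  move=> [a b] [a' b'] ab a'b'; have /= eaa' := tail _ _ ab a'b'.
  by rewrite -eaa' in a'b' *; apply: star_of_same_tail.
move=> [a b] [a' b'] ab a'b'; have /= ebb' := head _ _ ab a'b'.
by rewrite ebb' in ab *; apply: star_of_same_head.
Qed.

End Extremal.

Section TwoHubs.
Variables (n : nat) (E : {set 'I_n * 'I_n}) (s t : 'I_n).
Hypothesis cover : forall a b, (a, b) \in E -> a = s \/ b = t.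

Lemma two_hubs_acyclic : initial E s -> terminal E t -> acyclic E.
Proof.
move=> s_init t_term a b ab; apply/negP; have [eas|ebt] := cover ab.
  rewrite eas in ab *.
  have clS x y : x != s -> erel E x y -> y != s.
    by move=> _; apply: contraTneq => ->; rewrite /erel initial_edge.
  have bs : b != s by apply: contraTneq ab => ->; rewrite initial_edge.
  by move=> /(connect_closed_fwd clS bs); rewrite eqxx.
rewrite ebt in ab *.
have clT x y : x == t -> erel E x y -> y == t by move=> /eqP->; rewrite /erel terminal_edge.
move=> /(connect_closed_fwd clT (eqxx t)) /eqP eat.
by rewrite eat terminal_edge in ab.
Qed.

Lemma two_hubs_critical : (s, t) \notin E -> critical_edges E.
Proof.
move=> st a b ab; have [eas|ebt] := cover ab; [right|left].
  apply/eqP/cards1P; exists s; apply/setP => c; rewrite !inE.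
  apply/idP/eqP => [cb|->]; last by rewrite -eas.
  by case: (cover cb) => // ebt; move: st; rewrite -ebt -eas ab.
apply/eqP/cards1P; exists t; apply/setP => c; rewrite !inE.
apply/idP/eqP => [ac|->]; last by rewrite -ebt.
by case: (cover ac) => // eas; move: st; rewrite -ebt -eas ab.
Qed.

Lemma two_hubs_card_stars : (s, t) \notin E -> #|stars E| <= 2.
Proof.
move=> st; have Ecrit := two_hubs_critical st.
set T := [set e in E | e.1 == s]; set H := [set e in E | e.2 == t].
have sEU : stars E \subset star_of E @: T :|: star_of E @: H.
  rewrite -imsetU; apply: imsetS; apply/subsetP => -[a b] ab.
  by rewrite !inE ab /=; case: (cover ab) => ->; rewrite eqxx ?orbT.
apply: leq_trans (subset_leq_card sEU) _; apply: leq_trans (leq_card_setU _ _) _.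
rewrite -[2]/(1 + 1) leq_add //; apply: card_imset_le1 => -[a1 b1] [a2 b2]; rewrite !inE /=.
  move=> /andP[ab1 /eqP ea1] /andP[ab2 /eqP ea2].
  by rewrite ea1 ea2 in ab1 ab2 *; apply: star_of_same_tail.
move=> /andP[ab1 /eqP eb1] /andP[ab2 /eqP eb2].
by rewrite eb1 eb2 in ab1 ab2 *; apply: star_of_same_head.
Qed.

End TwoHubs.

Section TwoHubExample.
Variables (n A B C : nat).
Hypotheses (A_gt0 : 0 < A) (AB : A < B) (BC : B <= C) (Cn : C < n).

Definition two_hub_graph : {set 'I_n * 'I_n} :=
  [set e : 'I_n * 'I_n | (e.1 == 0 :> nat) && (A <= e.2 < C)
                          || (e.2 == C :> nat) && (0 < e.1 < B)].

Local Notation G := two_hub_graph.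
Let s : 'I_n := Ordinal (leq_ltn_trans (leq0n C) Cn).
Let t : 'I_n := Ordinal Cn.
Let vA : 'I_n := Ordinal (ltn_trans AB (leq_ltn_trans BC Cn)).

Lemma two_hub_graph_terminal v : terminal G v = (B <= v).
Proof.
case: (ltnP v B) => vB; last first.
  by apply/terminalP => w; rewrite inE /=; apply/negP => /orP[] /andP[] /eqP; lia.
apply/negbTE/terminalPn; have [v0|v_gt0] := posnP v.
  exists vA; rewrite inE /= v0 leqnn /=; lia.
by exists t; rewrite inE /= eqxx v_gt0 vB orbT.
Qed.

Lemma two_hub_graph_initial v : initial G v = ~~ (A <= v <= C).
Proof.
case: (boolP (A <= v <= C)) => /andP vAC /=; last first.
  by apply/initialP => u; rewrite inE /=; apply/negP => /orP[] /andP[] /eqP; lia.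
apply/negbTE/initialPn; case: (ltnP v C) => vC.
  by exists s; rewrite inE /=; lia.
by exists vA; rewrite inE /=; lia.
Qed.

Lemma nterminal_two_hub_graph : nterminal G = n - B.
Proof.
rewrite /nterminal.
have -> : [set v | terminal G v] = [set v : 'I_n | B <= v < n].
  by apply/setP => v; rewrite !inE two_hub_graph_terminal ltn_ord andbT.
by rewrite card_ord_interval; lia.
Qed.

Lemma ninitial_two_hub_graph : ninitial G = n - (C.+1 - A).
Proof.
rewrite /ninitial.
have -> : [set v | initial G v] = ~: [set v : 'I_n | A <= v < C.+1].
  by apply/setP => v; rewrite !inE two_hub_graph_initial.
by have := cardsC [set v : 'I_n | A <= v < C.+1]; rewrite card_ord_interval card_ord; lia.
Qed.

Lemma two_hub_graph_cover a b :
  (a, b) \in G -> a = s \/ b = t.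
Proof.
by rewrite inE /= => /orP[] /andP[/eqP e _]; [left|right]; apply: val_inj.
Qed.

Lemma two_hub_graph_tdg : tdg (n - (C.+1 - A)) (n - B) G.
Proof.
split; last by rewrite ninitial_two_hub_graph nterminal_two_hub_graph.
apply: two_hubs_acyclic two_hub_graph_cover _ _.
  by rewrite two_hub_graph_initial /=; lia.
by rewrite two_hub_graph_terminal.
Qed.

Lemma two_hub_graph_critical : critical_edges G.
Proof. by apply: two_hubs_critical two_hub_graph_cover _; rewrite inE /=; lia. Qed.

Lemma card_stars_two_hub_graph : #|stars G| <= 2.
Proof. by apply: two_hubs_card_stars two_hub_graph_cover _; rewrite inE /=; lia. Qed.

End TwoHubExample.

Lemma exists_two_star_tdg n x y : 0 < x -> 0 < y -> x.+2 <= n -> y.+2 <= n ->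
  exists E : {set 'I_n * 'I_n}, minimal_tdg x y E /\ #|stars E| <= 2.
Proof.
move=> x_gt0 y_gt0 xn yn; pose B := n - y; pose C := n - minn x y; pose A := C.+1 + x - n.
have A_gt0 : 0 < A by rewrite /A /C; lia.
have AB : A < B by rewrite /A /B /C; lia.
have BC : B <= C by rewrite /B /C; lia.
have Cn : C < n by rewrite /C; lia.
have Ex : n - (C.+1 - A) = x by rewrite /A /C; lia.
have Ey : n - B = y by rewrite /B; lia.
exists (two_hub_graph n A B C); split; last exact: card_stars_two_hub_graph.
apply: critical_minimal_tdg; last exact: two_hub_graph_critical.
by have := two_hub_graph_tdg A_gt0 AB BC Cn; rewrite Ex Ey.
Qed.

Lemma maximal_iff_card_stars_le2 n x y (E : {set 'I_n * 'I_n}) :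
  0 < x -> 0 < y -> maxn x y <= n -> minimal_tdg x y E ->
  (forall E' : {set 'I_n * 'I_n}, minimal_tdg x y E' -> #|E'| <= #|E|) <-> #|stars E| <= 2.
Proof.
move=> x_gt0 y_gt0 xyn Emin.
have count (F : {set 'I_n * 'I_n}) :
    minimal_tdg x y F -> #|F| + #|stars F| = (n - y) + (n - x).
  move=> Fmin; have [[_ [<- <-]] _] := Fmin.
  exact: card_edges_stars (minimal_tdg_critical Fmin).
have le1 (F : {set 'I_n * 'I_n}) :
    minimal_tdg x y F -> #|stars F| <= 1 <-> n.-1 <= y \/ n.-1 <= x.
  move=> Fmin; have [[_ [<- <-]] _] := Fmin.
  exact: card_stars_le1 (minimal_tdg_critical Fmin).
split=> [Emax|E2 F Fmin].
  have [/orP ext|] := boolP ((n.-1 <= y) || (n.-1 <= x)).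
    by apply: leq_trans (_ : 1 <= 2) => //; apply/(le1 _ Emin).
  rewrite negb_or -!ltnNge => /andP[yn xn].
  have [F [Fmin F2]] := @exists_two_star_tdg n x y x_gt0 y_gt0 ltac:(lia) ltac:(lia).
  by have := Emax _ Fmin; have := count _ Fmin; have := count _ Emin; lia.
suff : #|stars E| <= #|stars F| by have := count _ Fmin; have := count _ Emin; lia.
have [F1|F2] := leqP #|stars F| 1; last exact: leq_trans E2 F2.
have [F0|F_gt0] := posnP #|stars F|.
  (* F is edgeless, which forces x = y = n. *)
  move/eqP: (F0); rewrite stars_eq0 => /eqP FE.
  by have := count _ Fmin; rewrite F0 FE cards0; have := count _ Emin; lia.
by apply: leq_trans F_gt0; apply/(le1 _ Emin)/(le1 _ Fmin).
Qed.

(** * Components *)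

Section Components.
Variables (n : nat) (E : {set 'I_n * 'I_n}).
Implicit Types (a b c u v w : 'I_n) (e : 'I_n * 'I_n) (C : {set 'I_n}).

Lemma adj_sym : symmetric (adj E).
Proof. by move=> u v; rewrite /adj orbC. Qed.

Lemma mem_comp v : v \in Defs.comp E v.
Proof. by rewrite inE connect0. Qed.

Lemma comp_connect u v : connect (adj E) u v -> Defs.comp E u = Defs.comp E v.
Proof.
move=> uv; apply/setP => w; rewrite !inE; apply/idP/idP; last exact: connect_trans.
by apply: connect_trans; rewrite (sym_connect_sym adj_sym).
Qed.

Lemma adj_edge a b : (a, b) \in E -> adj E a b && adj E b a.
Proof. by rewrite /adj => ->; rewrite orbT. Qed.

Lemma isolatedPn v : reflect (exists w, adj E v w) (~~ isolated E v).
Proof. by apply: (iffP forallPn) => -[w]; rewrite ?negbK; exists w; rewrite ?negbK. Qed.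

Lemma adj_nonisolated u v : adj E u v -> ~~ isolated E u.
Proof. by move=> uv; apply/isolatedPn; exists v. Qed.

Lemma edge_nonisolated e : e \in E -> ~~ isolated E e.1 && ~~ isolated E e.2.
Proof. by case: e => a b /adj_edge/andP[/adj_nonisolated-> /adj_nonisolated->]. Qed.

Lemma interior_nonisolated v : interior E v -> ~~ isolated E v.
Proof. by case/andP=> /initialPn[u /edge_nonisolated /andP[]]. Qed.

Lemma comp_nontriv v : ~~ isolated E v -> Defs.comp E v \in nontriv_comps E.
Proof. by move=> nv; apply: imset_f; rewrite inE. Qed.

Lemma isolated_set0 : (forall v, isolated E v) -> E = set0.
Proof.
move=> iso; apply/setP => -[a b]; rewrite inE; apply/negP.
by move/edge_nonisolated; rewrite iso.
Qed.

Lemma single_comp_mem C v : nontriv_comps E = [set C] -> ~~ isolated E v -> v \in C.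
Proof. by move=> EC /comp_nontriv; rewrite EC inE => /eqP <-; apply: mem_comp. Qed.

Lemma single_comp_connect C u v : nontriv_comps E = [set C] ->
  ~~ isolated E u -> ~~ isolated E v -> connect (adj E) u v.
Proof.
move=> EC nu nv; have := single_comp_mem EC nv.
by move: (comp_nontriv nu); rewrite EC inE => /eqP <-; rewrite inE.
Qed.

End Components.

Definition anchor n (s : star n) : 'I_n :=
  match s with inl (inl a) | inl (inr a) => a | inr e => e.1 end.

Definition incident n (v : 'I_n) (e : 'I_n * 'I_n) := (e.1 == v) || (e.2 == v).

Section StarComponents.
Variables (n : nat) (E : {set 'I_n * 'I_n}).
Implicit Types (a b c u v w : 'I_n) (e : 'I_n * 'I_n) (s : star n) (C : {set 'I_n}).

Definition star_comp s := Defs.comp E (anchor s).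

Definition star_region s := [set v | [exists e in E, (star_of E e == s) && incident v e]].

Lemma star_comp_star_of e : e \in E -> star_comp (star_of E e) = Defs.comp E e.1.
Proof.
move: e => [a b] ab; rewrite /star_comp.
case: (star_of_cases E (a, b)) => -> //=.
by apply: esym; apply/comp_connect/connect1; case/andP: (adj_edge ab).
Qed.

Lemma nontriv_comps_sub_star_comp : nontriv_comps E \subset star_comp @: stars E.
Proof.
apply/subsetP => _ /imsetP[v /[!inE] /isolatedPn[w /orP vw] ->].
have [e eE ve] : exists2 e, e \in E & connect (adj E) v e.1.
  case: vw => [vw|wv]; [exists (v, w) | exists (w, v)] => //=.
  by apply: connect1; rewrite /adj wv orbT.
apply/imsetP; exists (star_of E e); first exact: imset_f.
by rewrite star_comp_star_of // (comp_connect ve).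
Qed.

Lemma card_nontriv_comps_le_stars : #|nontriv_comps E| <= #|stars E|.
Proof. exact: leq_trans (subset_leq_card nontriv_comps_sub_star_comp) (leq_imset_card _ _). Qed.

Hypothesis Ecrit : critical_edges E.

Lemma star_of_share c e e' : ~~ interior E c -> e \in E -> e' \in E ->
  incident c e -> incident c e' -> star_of E e = star_of E e'.
Proof.
move: e e' => [a b] [a' b'] nc ab a'b'; rewrite /incident /=.
move=> /orP[]/eqP eac /orP[]/eqP ea'c; subst.
- exact: star_of_same_tail.
- by rewrite (interior_edges a'b' ab) in nc.
- by rewrite (interior_edges ab a'b') in nc.
- exact: star_of_same_head.
Qed.

Lemma star_region_closed s : {in star_region s, forall v, ~~ interior E v} ->
  forall u w, u \in star_region s -> adj E u w -> w \in star_region s.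
Proof.
move=> noint u w uR; have := uR; rewrite inE => /exists_inP[e eE /andP[/eqP es ue]] uw.
have [f fE /andP[uf wf]] : exists2 f, f \in E & incident u f && incident w f.
  by case/orP: uw => [uw|wu]; [exists (u, w) | exists (w, u)]; rewrite // /incident !eqxx ?orbT.
rewrite inE; apply/exists_inP; exists f => //; rewrite wf andbT -es.
by apply/eqP/(star_of_share (noint _ uR)).
Qed.

Lemma card_stars_le_nontriv_comps :
  (forall v, ~~ interior E v) -> #|stars E| <= #|nontriv_comps E|.
Proof.
move=> noint.
rewrite -(@card_in_imset _ _ star_comp) => [|_ _ /imsetP[e1 e1E ->] /imsetP[e2 e2E ->]].
  apply/subset_leq_card/subsetP => _ /imsetP[_ /imsetP[e eE ->] ->].
  by rewrite star_comp_star_of //; apply: comp_nontriv; case/andP: (edge_nonisolated eE).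
rewrite !star_comp_star_of // => ecomp.
have e1R : e1.1 \in star_region (star_of E e1).
  by rewrite inE; apply/exists_inP; exists e1; rewrite // eqxx /incident eqxx.
have e1e2 : connect (adj E) e1.1 e2.1 by move: (mem_comp E e2.1); rewrite -ecomp inE.
have := connect_closed_fwd (star_region_closed (in1W noint)) e1R e1e2.
rewrite inE => /exists_inP[f fE /andP[/eqP <- fe2]].
by apply: star_of_share (noint e2.1) fE e2E fe2 _; rewrite /incident eqxx.
Qed.

Lemma star_region_interior C w s : nontriv_comps E = [set C] -> interior E w ->
  s \in stars E -> exists2 z, z \in star_region s & interior E z.
Proof.
move=> EC w_int /imsetP[e eE ->]; apply/exists_inP/contraT.
rewrite negb_exists_in => /forall_inP noint.
have eR : e.1 \in star_region (star_of E e).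
  by rewrite inE; apply/exists_inP; exists e; rewrite // eqxx /incident eqxx.
have ew : connect (adj E) e.1 w.
  apply: (single_comp_connect EC); last exact: interior_nonisolated.
  by case/andP: (edge_nonisolated eE).
by have := noint _ (connect_closed_fwd (star_region_closed noint) eR ew); rewrite w_int.
Qed.

Lemma card_stars_le2_interior C w (U D : star n) :
  nontriv_comps E = [set C] -> interior E w ->
  (forall z e, interior E z -> e \in E -> incident z e -> star_of E e \in [set U; D]) ->
  #|stars E| <= 2.
Proof.
move=> EC w_int UD; apply: leq_trans (_ : #|[set U; D]| <= 2).
  apply/subset_leq_card/subsetP => s sE.
  have [z /[!inE] /exists_inP[e eE /andP[/eqP <- ze]] z_int] := star_region_interior EC w_int sE.
  by have := UD _ _ z_int eE ze; rewrite !inE.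
by rewrite cards2; case: (_ != _).
Qed.

End StarComponents.

(** * Components of graphs with at most two stars *)

Section Shapes.
Variables (n : nat) (E : {set 'I_n * 'I_n}).
Implicit Types (a b c u v w z : 'I_n) (e : 'I_n * 'I_n) (C : {set 'I_n}).

Definition bundle_shape C := exists u v : 'I_n,
  u \in C /\ v \in C /\ initial E u /\ terminal E v /\
  2 <= #|[set w in C | interior E w]| /\
  (forall w, w \in C -> interior E w -> adj E u w && adj E v w).

Definition hub_shape C := exists w : 'I_n,
  let P := [set a | (a, w) \in E] in
  let Q := [set b | (w, b) \in E] in
  [set w' in C | interior E w'] = [set w] /\
  P \subset [set a | initial E a] /\
  Q \subset [set b | terminal E b] /\
  0 < #|P| /\ 0 < #|Q| /\
  (1 < #|P| -> forall a b, a \in P -> adj E a b -> b = w) /\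
  (1 < #|Q| -> forall a b, a \in Q -> adj E a b -> b = w).

Definition component_shape C :=
  (forall w, w \in C -> ~~ interior E w) \/ bundle_shape C \/ hub_shape C.

Definition graph_shape :=
  [/\ #|nontriv_comps E| <= 2,
      (forall v, isolated E v) -> n = ninitial E /\ ninitial E = nterminal E,
      #|nontriv_comps E| = 2 -> forall v, ~~ interior E v &
      forall C, nontriv_comps E = [set C] -> component_shape C].

Hypothesis Ecrit : critical_edges E.

Lemma bundle_card_stars_le2 C : nontriv_comps E = [set C] -> bundle_shape C -> #|stars E| <= 2.
Proof.
move=> EC [u [v [_ [_ [u_init [v_term [two uv_adj]]]]]]].
have /card_gt0P[w /[!inE] /andP[wC w_int]] : 0 < #|[set w in C | interior E w]| by lia.
have uzv z : interior E z -> (u, z) \in E /\ (z, v) \in E.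
  move=> z_int; have zC := single_comp_mem EC (interior_nonisolated z_int).
  have /andP[] := uv_adj z zC z_int.
  by rewrite /adj (initial_edge z u_init) (terminal_edge z v_term) orbF.
apply: (card_stars_le2_interior Ecrit (U := star_of E (u, w)) (D := star_of E (w, v)) EC w_int).
move=> z [a b] /uzv[uz zv] ab /orP[]/eqP/= ez; subst; rewrite !inE.
  have [_ wv] := uzv _ w_int.
  by rewrite (star_of_same_tail ab zv) (star_of_same_head Ecrit zv wv) eqxx orbT.
have [uw _] := uzv _ w_int.
by rewrite (star_of_same_head Ecrit ab uz) (star_of_same_tail uz uw) eqxx.
Qed.

Lemma hub_card_stars_le2 C : nontriv_comps E = [set C] -> hub_shape C -> #|stars E| <= 2.
Proof.
move=> EC [w /= [ICw _]].
have /[!inE] /andP[wC w_int] : w \in [set w' in C | interior E w'] by rewrite ICw inE.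
have only_w z : interior E z -> z = w.
  move=> z_int; apply/set1P; rewrite -ICw inE z_int andbT.
  exact: single_comp_mem EC (interior_nonisolated z_int).
case/andP: (w_int) => /initialPn[p pw] /terminalPn[q wq].
apply: (card_stars_le2_interior Ecrit (U := star_of E (p, w)) (D := star_of E (w, q)) EC w_int).
move=> z [a b] /only_w-> ab /orP[]/eqP/= ew; subst; rewrite !inE.
  by rewrite (star_of_same_tail ab wq) eqxx orbT.
by rewrite (star_of_same_head Ecrit ab pw) eqxx.
Qed.

Hypotheses (Eac : acyclic E) (E2 : #|stars E| <= 2).

Lemma star_of_in_out_neq p w q : (p, w) \in E -> (w, q) \in E ->
  star_of E (p, w) != star_of E (w, q).
Proof.
move=> pw wq; apply/eqP => /star_of_eq[/= epw|/= ewq].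
  by rewrite epw acyclic_loop in pw.
by rewrite ewq acyclic_loop in wq.
Qed.

Lemma stars_eq_in_out p w q : (p, w) \in E -> (w, q) \in E ->
  stars E = [set star_of E (p, w); star_of E (w, q)].
Proof.
move=> pw wq; apply/esym/eqP.
rewrite eqEcard cards2 (star_of_in_out_neq pw wq) (leq_trans E2) // andbT.
by apply/subsetP => s; rewrite !inE => /orP[]/eqP->; apply: imset_f.
Qed.

Lemma star_of_in_out_interior p w q p' z q' : (p, w) \in E -> (w, q) \in E ->
  (p', z) \in E -> (z, q') \in E ->
  star_of E (p', z) = star_of E (p, w) /\ star_of E (z, q') = star_of E (w, q).
Proof.
move=> pw wq p'z zq'.
have UD e : e \in E -> star_of E e = star_of E (p, w) \/ star_of E e = star_of E (w, q).
  move=> eE; have : star_of E e \in stars E by apply: imset_f.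
  by rewrite (stars_eq_in_out pw wq) !inE => /orP[]/eqP; [left|right].
have := star_of_in_out_neq p'z zq'.
case: (UD _ p'z) (UD _ zq') => [zU|zD] [zU'|zD'] neq //.
- by rewrite zU zU' eqxx in neq.
- (* The two crossed stars would give edges w -> z and z -> w. *)
  have wz := star_of_cross_edge p'z wq zD; have zw := star_of_cross_edge pw zq' (esym zU').
  by rewrite (acyclic_edge_rev Eac wz) in zw.
- by rewrite zD zD' eqxx in neq.
Qed.

Lemma bundle_of_two_interior C w w' : nontriv_comps E = [set C] ->
  interior E w -> interior E w' -> w != w' -> bundle_shape C.
Proof.
move=> EC w_int w'_int ww'; case/andP: (w_int) => /initialPn[p pw] /terminalPn[q wq].
have p_z z : interior E z -> (p, z) \in E /\ (z, q) \in E.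
  case/andP=> /initialPn[p' p'z] /terminalPn[q' zq'].
  have [/star_of_eq in_eq /star_of_eq out_eq] := star_of_in_out_interior pw wq p'z zq'.
  by split; [case: in_eq => /= [<-|->] | case: out_eq => /= [->|<-]].
have Cmem z : interior E z -> z \in C.
  by move=> z_int; apply: (single_comp_mem EC); apply: interior_nonisolated.
exists p, q; do !split.
- by apply: (single_comp_mem EC); case/andP: (edge_nonisolated pw).
- by apply: (single_comp_mem EC); case/andP: (edge_nonisolated wq).
- apply/initialP => r; apply/negP => rp.
  by have [] := p_z _ (interior_edges rp pw); rewrite acyclic_loop.
- apply/terminalP => r; apply/negP => qr.
  by have [_] := p_z _ (interior_edges wq qr); rewrite acyclic_loop.
- have <- : #|[set w; w']| = 2 by rewrite cards2 ww'.
  apply/subset_leq_card/subsetP => z.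
  by rewrite !inE => /orP[]/eqP->; rewrite ?Cmem ?w_int ?w'_int.
- by move=> z _ /p_z[pz zq]; rewrite /adj pz zq orbT.
Qed.

Lemma hub_of_unique_interior C w : w \in C -> interior E w ->
  (forall z, interior E z -> z = w) -> hub_shape C.
Proof.
move=> wC w_int only_w; exists w => /=.
have P_init a : (a, w) \in E -> initial E a.
  move=> aw; apply/initialP => r; apply/negP => ra.
  by have /only_w ea := interior_edges ra aw; rewrite ea acyclic_loop in aw.
have Q_term b : (w, b) \in E -> terminal E b.
  move=> wb; apply/terminalP => r; apply/negP => br.
  by have /only_w eb := interior_edges wb br; rewrite eb acyclic_loop in wb.
case/andP: (w_int) => /initialPn[p pw] /terminalPn[q wq].
do !split.
- by apply/setP => z; rewrite !inE; apply/andP/eqP => [[_ /only_w]|->].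
- by apply/subsetP => a; rewrite !inE; apply: P_init.
- by apply/subsetP => b; rewrite !inE; apply: Q_term.
- by apply/card_gt0P; exists p; rewrite inE.
- by apply/card_gt0P; exists q; rewrite inE.
- move=> iw a b; rewrite inE => aw /orP[ab|]; last by rewrite initial_edge ?P_init.
  exact: outdeg1_eq (critical_outdeg1 Ecrit aw iw) ab aw.
- move=> ow b c; rewrite inE => wb /orP[|cb]; first by rewrite terminal_edge ?Q_term.
  exact: indeg1_eq (critical_indeg1 Ecrit wb ow) cb wb.
Qed.

Lemma component_shape_of_card_stars_le2 C : nontriv_comps E = [set C] -> component_shape C.
Proof.
move=> EC; have [/exists_inP[w wC w_int]|] := boolP [exists w in C, interior E w]; last first.
  by rewrite negb_exists_in => /forall_inP noint; left.
right; have [/exists_inP[w' _ /andP[w'_int w'w]]|] :=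
  boolP [exists w' in C, interior E w' && (w' != w)].
  by left; apply: bundle_of_two_interior EC w_int w'_int _; rewrite eq_sym.
rewrite negb_exists_in => /forall_inP only_w; right; apply: hub_of_unique_interior wC w_int _.
move=> z z_int; apply/eqP; have := only_w z (single_comp_mem EC (interior_nonisolated z_int)).
by rewrite z_int negbK.
Qed.

Lemma two_comps_no_interior : #|nontriv_comps E| = 2 -> forall v, ~~ interior E v.
Proof.
move=> comps2 w; apply/negP => w_int; case/andP: (w_int) => /initialPn[p pw] /terminalPn[q wq].
have : #|nontriv_comps E| <= 1; last by rewrite comps2.
apply: leq_trans (subset_leq_card (nontriv_comps_sub_star_comp E)) _.
rewrite (stars_eq_in_out pw wq) imsetU1 imset_set1 !star_comp_star_of //=.
rewrite (@comp_connect _ _ p w) ?cards2 ?eqxx //.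
by apply: connect1; case/andP: (adj_edge pw).
Qed.

End Shapes.

Lemma graph_shape_iff_card_stars_le2 n (E : {set 'I_n * 'I_n}) :
  acyclic E -> critical_edges E -> graph_shape E <-> #|stars E| <= 2.
Proof.
move=> Eac Ecrit; split=> [[comps2 _ two one]|E2]; last first.
  split.
  - exact: leq_trans (card_nontriv_comps_le_stars E) E2.
  - by move/isolated_set0 => ->; rewrite ninitial_set0 nterminal_set0.
  - exact: two_comps_no_interior.
  - exact: component_shape_of_card_stars_le2.
have [noint|] := boolP [forall v, ~~ interior E v].
  exact: leq_trans (card_stars_le_nontriv_comps Ecrit (forallP noint)) comps2.
rewrite negb_forall => /existsP[w /negPn w_int].
have w_nontriv := interior_nonisolated w_int.
have /cards1P[C EC] : #|nontriv_comps E| == 1.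
  have : 0 < #|nontriv_comps E| by apply/card_gt0P; exists (Defs.comp E w); apply: comp_nontriv.
  have : #|nontriv_comps E| != 2 by apply: contraTneq w_int => /two ->.
  lia.
case: (one C EC) => [noC|[/(bundle_card_stars_le2 Ecrit EC)|/(hub_card_stars_le2 Ecrit EC)]] //.
by have := noC w (single_comp_mem EC w_nontriv); rewrite w_int.
Qed.

Theorem mainTheorem3 (x y n : nat) (E : {set 'I_n * 'I_n}) :
  1 <= x -> 1 <= y -> maxn x y <= n ->
  minimal_tdg x y E ->
  ((forall E' : {set 'I_n * 'I_n}, minimal_tdg x y E' -> #|E'| <= #|E|)
   <->
   [/\ #|nontriv_comps E| <= 2,
       (* (1) all vertices isolated *)
       ((forall v : 'I_n, isolated E v) -> n = x /\ x = y),
       (* (2) two non-trivial components *)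
       (#|nontriv_comps E| = 2 -> forall v : 'I_n, ~~ interior E v) &
       (* (3) exactly one non-trivial component C *)
       (forall C : {set 'I_n}, nontriv_comps E = [set C] ->
          (* (a) *)
          (forall w, w \in C -> ~~ interior E w)
          \/
          (* (b) *)
          (exists u v : 'I_n,
             u \in C /\ v \in C /\ initial E u /\ terminal E v /\
             2 <= #|[set w in C | interior E w]| /\
             (forall w, w \in C -> interior E w -> adj E u w && adj E v w))
          \/
          (* (c) *)
          (exists w : 'I_n,
             let P := [set a | (a, w) \in E] in
             let Q := [set b | (w, b) \in E] in
             [set w' in C | interior E w'] = [set w] /\
             P \subset [set a | initial E a] /\
             Q \subset [set b | terminal E b] /\
             0 < #|P| /\ 0 < #|Q| /\
             (1 < #|P| -> forall a b, a \in P -> adj E a b -> b = w) /\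
             (1 < #|Q| -> forall a b, a \in Q -> adj E a b -> b = w)))]).
Proof.
move=> x_gt0 y_gt0 xyn Emin.
apply: iff_trans (maximal_iff_card_stars_le2 x_gt0 y_gt0 xyn Emin) _.
have [[Eac [<- <-]] _] := Emin.
exact: iff_sym (graph_shape_iff_card_stars_le2 Eac (minimal_tdg_critical Emin)).
Qed.
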